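(* Let $n\ge 1$ and let $\mathcal{R},\mathcal{S}\subseteq 2^{[n]}$ be clutters such that for every partition $[n]=E_0\uplus E_1$ exactly one of the following holds: some member of $\mathcal{R}$ is contained in $E_0$, or some member of $\mathcal{S}$ is contained in $E_1$. Let $K:=2^{[n]}\setminus\widehat{\mathcal{R}}$, where $\widehat{\mathcal{R}}=\{A\subseteq [n]\mid \exists X\in\mathcal{R},\ X\subseteq A\}$, and let $K^\circ=\{[n]\setminus A\mid A\notin K\}$ be its Alexander dual. Suppose $[n]=A_1\uplus\{i\}\uplus A_2$ where every element of $A_1$ is smaller than $i$, every element of $A_2$ is larger than $i$, $A_1\in K$ and $A_2\in K^\circ$ (i.e. $(A_1,A_2;\{i\})$ is the $(n-2)$-dimensional critical simplex of the perfect discrete Morse function on the Bier sphere $K\ast_\Delta K^\circ$). Then \[\min_{I\in\mathcal{R}}\max_{x\in I} x \;=\; i \;=\; \max_{J\in\mathcal{S}}\min_{x\in J} x.\]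
   Context: A clutter on a finite set is a family of subsets none of which contains another. The Bier sphere $Bier(K)=K\ast_\Delta K^\circ$ is the deleted join of $K$ and its Alexander dual; its faces are written as triples $(A_1,A_2;B)$ with $A_1\in K$, $A_2\in K^\circ$, $A_1\cap A_2=\emptyset$ and $B=[n]\setminus(A_1\cup A_2)$. (The real function $f$ on the ground set in the Edmonds–Fulkerson setting is here taken to be the identity on $[n]$.) *)

From mathcomp Require Import all_boot.
Set Implicit Arguments. Unset Strict Implicit. Unset Printing Implicit Defensive.

(* Ground set [n] is modelled by 'I_n (elements 0..n-1, ordered by value). *)

Definition clutter (n : nat) (F : {set {set 'I_n}}) : Prop :=
  forall A B, A \in F -> B \in F -> A \subset B -> A = B.

Definition upclosure (n : nat) (R : {set {set 'I_n}}) : {set {set 'I_n}} :=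
  [set A : {set 'I_n} | [exists X in R, X \subset A]].

Definition complexK (n : nat) (R : {set {set 'I_n}}) : {set {set 'I_n}} :=
  ~: upclosure R.

Definition alexander_dual (n : nat) (K : {set {set 'I_n}}) : {set {set 'I_n}} :=
  [set ~: A | A in ~: K].

From HB Require Import structures.
From mathcomp Require Import all_boot.

Set Implicit Arguments.
Unset Strict Implicit.
Unset Printing Implicit Defensive.

(* Since [A1] lies in [K], no member of [R] is contained in [A1]; since [A2]
   lies in the Alexander dual, some member [X] of [R] is contained in
   [A1 ∪ {i}], the complement of [A2].  Every element outside [A1] is [>= i]
   and every element outside [A2] is [<= i], so every member of [R] has
   maximum [>= i] while [X] has maximum [<= i].  Dually, the blocker
   condition applied to [E0 = A1] gives a member of [S] inside [{i} ∪ A2]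
   (minimum [>= i]), and applied to [E0 = A1 ∪ {i}] (which contains [X]) it
   forbids members of [S] inside [A2], so every member of [S] has minimum
   [<= i]. *)

(* [minn] has no unit on [nat], so it is only a commutative semigroup law,
   which is all [bigD1] needs. *)
HB.instance Definition _ := SemiGroup.isComLaw.Build nat minn minnA minnC.

Lemma bigmin_leq_cond (T : finType) (P : pred T) (F : T -> nat) m x :
  P x -> \big[minn/m]_(j | P j) F j <= F x.
Proof. by move=> Px; rewrite (bigD1 x) //= geq_minl. Qed.

Lemma leq_bigmin (T : finType) (P : pred T) (F : T -> nat) m t :
  t <= m -> (forall j, P j -> t <= F j) -> t <= \big[minn/m]_(j | P j) F j.
Proof.
by move=> t_le_m t_le_F; elim/big_ind: _ => // a b ta tb; rewrite leq_min ta tb.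
Qed.

Section MinMaxThreshold.

Variables (T : finType) (f : T -> nat) (m t : nat).
Hypothesis t_le_m : t <= m.

Lemma bigmin_bigmax_eq (F : {set {set T}}) :
  (exists2 X, X \in F & {in X, forall x, f x <= t}) ->
  (forall I, I \in F -> exists2 x, x \in I & t <= f x) ->
  \big[minn/m]_(I in F) \max_(x in I) f x = t.
Proof.
move=> [X XF X_le] F_ge; apply/eqP; rewrite eqn_leq; apply/andP; split.
  by apply: leq_trans (bigmin_leq_cond _ _ XF) _; apply/bigmax_leqP.
apply: leq_bigmin => // I /F_ge [x Ix t_le_fx].
exact: leq_trans t_le_fx (leq_bigmax_cond _ Ix).
Qed.

Lemma bigmax_bigmin_eq (F : {set {set T}}) :
  (exists2 Y, Y \in F & {in Y, forall x, t <= f x}) ->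
  (forall J, J \in F -> exists2 x, x \in J & f x <= t) ->
  \max_(J in F) \big[minn/m]_(x in J) f x = t.
Proof.
move=> [Y YF Y_ge] F_le; apply/eqP; rewrite eqn_leq; apply/andP; split.
  apply/bigmax_leqP => J /F_le [x Jx fx_le_t].
  exact: leq_trans (bigmin_leq_cond _ _ Jx) fx_le_t.
by apply: leq_trans (leq_bigmax_cond _ YF); apply: leq_bigmin.
Qed.

End MinMaxThreshold.

Lemma mem_complexK (n : nat) (R : {set {set 'I_n}}) A :
  (A \in complexK R) = ~~ [exists X in R, X \subset A].
Proof. by rewrite !inE. Qed.

Lemma mem_alexander_dual (n : nat) (K : {set {set 'I_n}}) A :
  (A \in alexander_dual K) = (~: A \notin K).
Proof. by rewrite -{1}(setCK A) mem_imset ?inE //; exact: setC_inj. Qed.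

Lemma mem_alexander_dual_complexK (n : nat) (R : {set {set 'I_n}}) A :
  (A \in alexander_dual (complexK R)) = [exists X in R, X \subset ~: A].
Proof. by rewrite mem_alexander_dual mem_complexK negbK. Qed.

Lemma not_subset_member (T : finType) (F : {set {set T}}) (A I : {set T}) :
  ~~ [exists X in F, X \subset A] -> I \in F -> exists2 x, x \in I & x \notin A.
Proof.
move=> noFA IF; apply/subsetPn; apply: contra noFA => IA.
by apply/existsP; exists I; rewrite IF.
Qed.

Theorem mainTheorem2 (n : nat) (R S : {set {set 'I_n}}) (A1 A2 : {set 'I_n}) (i : 'I_n) :
  0 < n ->
  clutter R -> clutter S ->
  (forall E0 : {set 'I_n},
     [exists X in R, X \subset E0] != [exists Y in S, Y \subset ~: E0]) ->
  [disjoint A1 & A2] -> i \notin A1 -> i \notin A2 ->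
  A1 :|: [set i] :|: A2 = [set: 'I_n] ->
  (forall x, x \in A1 -> (x < i)%N) ->
  (forall x, x \in A2 -> (i < x)%N) ->
  A1 \in complexK R ->
  A2 \in alexander_dual (complexK R) ->
  \big[minn/n]_(I in R) (\max_(x in I) nat_of_ord x) = nat_of_ord i /\
  nat_of_ord i = \max_(J in S) (\big[minn/n]_(x in J) nat_of_ord x).
Proof.
move=> _ _ _ blocker _ _ _ cover ltA1 gtA2.
rewrite mem_complexK mem_alexander_dual_complexK => noR_A1 /existsP[X /andP[XR XA2]].
have blockS E0 : [exists Y in S, Y \subset ~: E0] = ~~ [exists X in R, X \subset E0].
  by move: (blocker E0); case: existsP; case: existsP.
have x_cases x : [|| x \in A1, x == i | x \in A2].
  have : x \in A1 :|: [set i] :|: A2 by rewrite cover inE.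
  by rewrite !inE orbA.
have le_i x : x \notin A2 -> x <= i.
  by case/or3P: (x_cases x) => [/ltA1/ltnW | /eqP-> | ->].
have ge_i x : x \notin A1 -> i <= x.
  by case/or3P: (x_cases x) => [-> | /eqP-> | /gtA2/ltnW].
have i_le_n : i <= n by exact: ltnW.
split.
  apply: (bigmin_bigmax_eq (f := @nat_of_ord n) i_le_n).
    by exists X => // x /(subsetP XA2); rewrite inE; exact: le_i.
  by move=> I /(not_subset_member noR_A1) [x Ix /ge_i]; exists x.
have /existsP[Y /andP[YS YA1]] := etrans (blockS A1) noR_A1.
have noS_A2 : ~~ [exists Y in S, Y \subset ~: (A1 :|: [set i])].
  rewrite blockS negbK; apply/existsP; exists X; rewrite XR.
  apply: subset_trans XA2 _; apply/subsetP => x; rewrite !inE.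
  by case/or3P: (x_cases x) => -> //; rewrite orbT.
symmetry; apply: (bigmax_bigmin_eq (f := @nat_of_ord n) i_le_n).
  by exists Y => // x /(subsetP YA1); rewrite inE; exact: ge_i.
move=> J /(not_subset_member noS_A2) [x Jx]; rewrite inE negbK => A1i_x.
by exists x => //; case/setUP: A1i_x => [/ltA1/ltnW | /set1P->].
Qed.
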